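(* (1) Soundness: if $\Phi\vdash_I\rho\sqsubseteq\tau$ holds for template types $\rho,\tau$, then $\rho\xi\sqsubseteq_J\tau\xi$ for every model $(J,\xi)$ of $\Phi$. (2) Completeness: if $\rho\xi\sqsubseteq_J\tau\xi$ holds for template types $\rho,\tau$ and a second-order substitution $\xi$, then $\Phi\vdash_I\rho\sqsubseteq\tau$ is derivable for some SOCP $\Phi$, and there exists an extension $\xi'$ of $\xi$, whose domain coincides with the second-order variables occurring in the derivation of $\Phi\vdash_I\rho\sqsubseteq\tau$, such that $(J,\xi')$ is a model of $\Phi$.
   Context: Second-order index terms $a::=i\mid\alpha\mid g(a_1,\dots,a_k)$ over index variables $i$, second-order index variables $\alpha$ and index symbols $g$ (including $0,\mathsf s,+$). An interpretation $J$ maps $k$-ary symbols to total weakly monotone functions $\mathbb N^k\to\mathbb N$ ($0,\mathsf s,+$ standard); $a\le_J b$ iff $[a]^\beta_J\le[b]^\beta_J$ for all assignments $\beta$ (for index terms without second-order variables). An SOCP is a set of inequalities $a\le b$ and occurrence constraints $i\notin\alpha$; a second-order substitution $\xi$ maps second-order variables to index terms without second-order variables; $(J,\xi)$ is a model of $\Phi$ if $a\xi\le_J b\xi$ for all inequalities and $i\notin\mathrm{Var}(\xi(\alpha))$ for all occurrence constraints. Sized types: monotypes $\rho::=B^a\mid\rho_1\times\rho_2\mid\sigma\to\rho$; polytypes $\forall\vec i.\,\sigma\to\rho$; types $\sigma::=\rho\mid$ polytype; a monotype is identified with $\forall\cdot.\rho$; types up to $\alpha$-equivalence; a template type is one whose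 indices may contain second-order variables. $\mathrm{FV}(\sigma)$ is the set of free index variables. Instantiation $\forall\vec i.\tau\sqsupseteq\rho$ iff $\rho=\tau\{\vec i:=\vec a\}$. Subtyping $\sqsubseteq_J$: $B^a\sqsubseteq_J B^b$ if $a\le_J b$; componentwise on products; $\sigma_1\to\rho_1\sqsubseteq_J\sigma_2\to\rho_2$ if $\sigma_2\sqsubseteq_J\sigma_1$ and $\rho_1\sqsubseteq_J\rho_2$; $\forall\vec i.\rho_1\sqsubseteq_J\sigma_2$ if $\sigma_2\sqsupseteq\rho_2$, $\rho_1\sqsubseteq_J\rho_2$, $\vec i\cap\mathrm{FV}(\sigma_2)=\emptyset$. Subtyping inference $\Phi\vdash_I\sigma\sqsubseteq\tau$: $\{a\le b\}\vdash_I B^a\sqsubseteq B^b$; from $\Phi_1\vdash_I\rho_1\sqsubseteq\rho_3$ and $\Phi_2\vdash_I\rho_2\sqsubseteq\rho_4$ infer $\Phi_1\cup\Phi_2\vdash_I\rho_1\times\rho_2\sqsubseteq\rho_3\times\rho_4$; from $\Phi_1\vdash_I\sigma_2\sqsubseteq\sigma_1$ and $\Phi_2\vdash_I\rho_1\sqsubseteq\rho_2$ infer $\Phi_1\cup\Phi_2\vdash_I\sigma_1\to\rho_1\sqsubseteq\sigma_2\to\rho_2$; for fresh second-order variables $\vec\alpha$, from $\Phi\vdash_I\rho_1\sqsubseteq\rho_2\{\vec j:=\vec\alpha\}$ and $\vec i\cap\mathrm{FV}(\forall\vec j.\rho_2)=\emptyset$ infer $\Phi\cup\{\vec i\notin\rho_1\}\cup\{\vec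 i\notin\rho_2\}\vdash_I\forall\vec i.\rho_1\sqsubseteq\forall\vec j.\rho_2$. Here, for index variables $\vec i$ and template types $\vec\rho$, $\vec i\notin\vec\rho$ denotes the set of occurrence constraints $i_k\notin\alpha$ for all $i_k$ in $\vec i$ and all second-order variables $\alpha$ occurring in some $\rho_l$. *)

From Stdlib Require Import List Arith.
Import ListNotations.

(* Index symbols other than 0, s, + are named by a nat [g]; the arity of an
   occurrence [IApp g ts] is [length ts] (so a k-ary symbol is the pair (g,k)). *)
Inductive iterm : Type :=
| IVar  (i : nat)
| SVar  (a : nat)
| IZero
| ISucc (t : iterm)
| IPlus (t u : iterm)
| IApp  (g : nat) (ts : list iterm).

Fixpoint ivars (t : iterm) : list nat :=
  match t with
  | IVar i => [i]
  | SVar _ => []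
  | IZero => []
  | ISucc t => ivars t
  | IPlus t u => ivars t ++ ivars u
  | IApp _ ts => flat_map ivars ts
  end.

Fixpoint isv (t : iterm) : list nat :=
  match t with
  | IVar _ => []
  | SVar a => [a]
  | IZero => []
  | ISucc t => isv t
  | IPlus t u => isv t ++ isv u
  | IApp _ ts => flat_map isv ts
  end.

Fixpoint isub (th ths : nat -> iterm) (t : iterm) : iterm :=
  match t with
  | IVar i => th i
  | SVar a => ths a
  | IZero => IZero
  | ISucc t => ISucc (isub th ths t)
  | IPlus t u => IPlus (isub th ths t) (isub th ths u)
  | IApp g ts => IApp g (map (isub th ths) ts)
  end.

(* [ifun g] interprets, for every k, the k-ary symbol (g,k) as a total
   function on lists of length k; it is required weakly monotone. *)
Record interp : Type := {
  ifun : nat -> list nat -> nat;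
  ifun_mono : forall g xs ys, Forall2 le xs ys -> ifun g xs <= ifun g ys
}.

Fixpoint ieval (J : interp) (beta : nat -> nat) (t : iterm) : nat :=
  match t with
  | IVar i => beta i
  | SVar _ => 0   (* irrelevant: only used on terms without SO variables *)
  | IZero => 0
  | ISucc t => S (ieval J beta t)
  | IPlus t u => ieval J beta t + ieval J beta u
  | IApp g ts => ifun J g (map (ieval J beta) ts)
  end.

Definition leJ (J : interp) (a b : iterm) : Prop :=
  isv a = [] /\ isv b = [] /\ forall beta, ieval J beta a <= ieval J beta b.

(* [TBase B a] is B^a (B a base-type name); [TAll is r] is forall is. r;
   a monotype r is identified with [TAll [] r]. *)
Inductive mono : Type :=
| TBase (B : nat) (a : iterm)
| TProd (r1 r2 : mono)
| TArr  (s : ty) (r : mono)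
with ty : Type :=
| TAll (is : list nat) (r : mono).

Definition is_arrow (r : mono) : Prop :=
  match r with TArr _ _ => True | _ => False end.

Fixpoint wfm (r : mono) : Prop :=
  match r with
  | TBase _ _ => True
  | TProd r1 r2 => wfm r1 /\ wfm r2
  | TArr s r => wft s /\ wfm r
  end
with wft (s : ty) : Prop :=
  match s with
  | TAll is r => NoDup is /\ (is <> [] -> is_arrow r) /\ wfm r
  end.

Fixpoint mfv (r : mono) : list nat :=
  match r with
  | TBase _ a => ivars a
  | TProd r1 r2 => mfv r1 ++ mfv r2
  | TArr s r => tfv s ++ mfv r
  end
with tfv (s : ty) : list nat :=
  match s with
  | TAll is r => filter (fun x => negb (existsb (Nat.eqb x) is)) (mfv r)
  end.

Fixpoint msv (r : mono) : list nat :=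
  match r with
  | TBase _ a => isv a
  | TProd r1 r2 => msv r1 ++ msv r2
  | TArr s r => tsv s ++ msv r
  end
with tsv (s : ty) : list nat :=
  match s with
  | TAll _ r => msv r
  end.

Fixpoint upd (th : nat -> iterm) (js : list nat) (ts : list iterm) (x : nat)
  : iterm :=
  match js, ts with
  | j :: js', t :: ts' => if Nat.eqb x j then t else upd th js' ts' x
  | _, _ => th x
  end.

(* Capture-avoiding simultaneous substitution on types, as a relation:
   [msubst th ths r r'] means that r' is (an alpha-variant of) the result of
   substituting th for index variables and ths for SO variables in r. *)
Inductive msubst (th ths : nat -> iterm) : mono -> mono -> Prop :=
| ms_base B a : msubst th ths (TBase B a) (TBase B (isub th ths a))
| ms_prod r1 r2 r1' r2' :
    msubst th ths r1 r1' -> msubst th ths r2 r2' ->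
    msubst th ths (TProd r1 r2) (TProd r1' r2')
| ms_arr s r s' r' :
    tsubst th ths s s' -> msubst th ths r r' ->
    msubst th ths (TArr s r) (TArr s' r')
with tsubst (th ths : nat -> iterm) : ty -> ty -> Prop :=
| ts_all is ks r r' :
    length ks = length is ->
    NoDup ks ->
    (forall k x, In k ks -> In x (tfv (TAll is r)) -> ~ In k (ivars (th x))) ->
    (forall k a, In k ks -> In a (msv r) -> ~ In k (ivars (ths a))) ->
    msubst (upd th is (map IVar ks)) ths r r' ->
    tsubst th ths (TAll is r) (TAll ks r').

Definition aeq (s s' : ty) : Prop := tsubst IVar SVar s s'.

Definition inst (s : ty) (r : mono) : Prop :=
  match s with
  | TAll js t => exists as_ : list iterm,
      length as_ = length js /\ msubst (upd IVar js as_) SVar t r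
  end.

Inductive subm (J : interp) : mono -> mono -> Prop :=
| sub_base B a b : leJ J a b -> subm J (TBase B a) (TBase B b)
| sub_prod r1 r2 r3 r4 :
    subm J r1 r3 -> subm J r2 r4 -> subm J (TProd r1 r2) (TProd r3 r4)
| sub_arr s1 r1 s2 r2 :
    subt J s2 s1 -> subm J r1 r2 -> subm J (TArr s1 r1) (TArr s2 r2)
with subt (J : interp) : ty -> ty -> Prop :=
| sub_all is r1 s2 r2 :
    inst s2 r2 -> subm J r1 r2 ->
    (forall i, In i is -> ~ In i (tfv s2)) ->
    subt J (TAll is r1) s2
| sub_alpha s1 s1' s2 s2' :
    aeq s1 s1' -> aeq s2 s2' -> subt J s1' s2' -> subt J s1 s2.

Inductive constr : Type :=
| CLe (a b : iterm)
| CNotIn (i a : nat).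

Definition socp := list constr.

Definition notin_cs (is : list nat) (r : mono) : socp :=
  flat_map (fun i => map (fun a => CNotIn i a) (msv r)) is.

Definition sosubst := nat -> option iterm.

Definition is_sosubst (xi : sosubst) : Prop :=
  forall a t, xi a = Some t -> isv t = [].

Definition xis (xi : sosubst) (a : nat) : iterm :=
  match xi a with Some t => t | None => SVar a end.

Definition model (J : interp) (xi : sosubst) (Phi : socp) : Prop :=
  forall c, In c Phi ->
  match c with
  | CLe a b => leJ J (isub IVar (xis xi) a) (isub IVar (xis xi) b)
  | CNotIn i a => exists t, xi a = Some t /\ ~ In i (ivars t)
  end.

(* The last index V lists the second-order variables occurring in the
   derivation.  Freshness: in binary rules the SO variables of the two
   subderivations may only be shared if they occur in the conclusion. *)
Definition shared_ok (V1 V2 W : list nat) : Prop :=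
  forall a, In a V1 -> In a V2 -> In a W.

Inductive inferm : socp -> mono -> mono -> list nat -> Prop :=
| inf_base B a b :
    inferm [CLe a b] (TBase B a) (TBase B b) (isv a ++ isv b)
| inf_prod Phi1 Phi2 r1 r2 r3 r4 V1 V2 :
    inferm Phi1 r1 r3 V1 -> inferm Phi2 r2 r4 V2 ->
    shared_ok V1 V2 (msv r1 ++ msv r2 ++ msv r3 ++ msv r4) ->
    inferm (Phi1 ++ Phi2) (TProd r1 r2) (TProd r3 r4) (V1 ++ V2)
| inf_arr Phi1 Phi2 s1 r1 s2 r2 V1 V2 :
    infert Phi1 s2 s1 V1 -> inferm Phi2 r1 r2 V2 ->
    shared_ok V1 V2 (tsv s1 ++ msv r1 ++ tsv s2 ++ msv r2) ->
    inferm (Phi1 ++ Phi2) (TArr s1 r1) (TArr s2 r2) (V1 ++ V2)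
with infert : socp -> ty -> ty -> list nat -> Prop :=
| inf_all Phi is r1 js r2 alphas r2' V :
    length alphas = length js ->
    NoDup alphas ->
    (forall a, In a alphas -> ~ In a (msv r1) /\ ~ In a (msv r2)) ->
    msubst (upd IVar js (map SVar alphas)) SVar r2 r2' ->
    inferm Phi r1 r2' V ->
    (forall i, In i is -> ~ In i (tfv (TAll js r2))) ->
    infert (Phi ++ notin_cs is r1 ++ notin_cs is r2)
           (TAll is r1) (TAll js r2) (V ++ msv r1 ++ msv r2)
| inf_alpha Phi s1 s1' s2 s2' V :
    aeq s1 s1' -> aeq s2 s2' -> infert Phi s1' s2' V -> infert Phi s1 s2 V.

From Stdlib Require Import List Arith Lia.
Import ListNotations.

(* In the rule for
   polytypes the fresh second-order variables alpha stand for the instantiation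
   of the right-hand side: valuing them by xi turns the premise into an instance
   of the right-hand polytype, and the occurrence constraints i notin alpha ensure
   that applying xi neither captures the bound variables of the left-hand side
   nor makes them free on the right.

   Semantic
   subtyping only relates types without second-order variables, so xi is defined
   on every second-order variable of rho and tau.  In the polytype case the
   semantic derivation instantiates the right-hand binders by index terms; the
   inference rule introduces instead second-order variables chosen above every
   variable used so far, and xi is extended by mapping them to those terms.  The
   models built for the two premises of a binary rule agree with xi on the
   conclusion and are otherwise defined on disjoint ranges of fresh variables,
   so they merge into a single model. *)

(** * Index terms *)

Definition iterm_ind' (P : iterm -> Prop)
  (HIVar : forall i, P (IVar i)) (HSVar : forall a, P (SVar a)) (HZero : P IZero)
  (HSucc : forall t, P t -> P (ISucc t))
  (HPlus : forall t u, P t -> P u -> P (IPlus t u))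
  (HApp : forall g ts, Forall P ts -> P (IApp g ts)) : forall t, P t :=
  fix F t := match t with
  | IVar i => HIVar i
  | SVar a => HSVar a
  | IZero => HZero
  | ISucc t => HSucc t (F t)
  | IPlus t u => HPlus t u (F t) (F u)
  | IApp g ts => HApp g ts ((fix G ts := match ts return Forall P ts with
      | [] => Forall_nil _
      | t :: ts' => Forall_cons _ (F t) (G ts') end) ts)
  end.

Lemma isub_isub th ths th' ths' u :
  isub th ths (isub th' ths' u) =
  isub (fun x => isub th ths (th' x)) (fun a => isub th ths (ths' a)) u.
Proof.
  induction u using iterm_ind'; simpl; f_equal; auto.
  rewrite map_map. apply map_ext_in. intros. rewrite Forall_forall in H. auto.
Qed.

Lemma isub_ext th ths th' ths' u :
  (forall x, In x (ivars u) -> th x = th' x) ->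
  (forall a, In a (isv u) -> ths a = ths' a) ->
  isub th ths u = isub th' ths' u.
Proof.
  induction u using iterm_ind'; simpl; intros Hth Hths; f_equal; auto.
  - apply IHu1; intros; (apply Hth || apply Hths); apply in_or_app; auto.
  - apply IHu2; intros; (apply Hth || apply Hths); apply in_or_app; auto.
  - apply map_ext_in. intros v Hv. rewrite Forall_forall in H.
    apply H; auto; intros; (apply Hth || apply Hths); apply in_flat_map; eauto.
Qed.

Lemma isub_id u : isub IVar SVar u = u.
Proof.
  induction u using iterm_ind'; simpl; f_equal; auto.
  induction H; simpl; f_equal; auto.
Qed.

Definition image_vars (f : iterm -> list nat) (th ths : nat -> iterm)
  (xs as_ : list nat) (y : nat) : Prop :=
  (exists x, In x xs /\ In y (f (th x))) \/ (exists a, In a as_ /\ In y (f (ths a))).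

Lemma image_vars_app f th ths xs1 xs2 as1 as2 y :
  image_vars f th ths (xs1 ++ xs2) (as1 ++ as2) y <->
  image_vars f th ths xs1 as1 y \/ image_vars f th ths xs2 as2 y.
Proof.
  unfold image_vars. split.
  - intros [[x [[Hx|Hx]%in_app_or Hy]]|[a [[Ha|Ha]%in_app_or Hy]]]; eauto 6.
  - intros [[[x [Hx Hy]]|[a [Ha Hy]]]|[[x [Hx Hy]]|[a [Ha Hy]]]];
      [left|right|left|right]; eauto using in_or_app.
Qed.

Lemma In_vars_isub (f : iterm -> list nat) :
  f IZero = [] -> (forall t, f (ISucc t) = f t) ->
  (forall t u, f (IPlus t u) = f t ++ f u) ->
  (forall g ts, f (IApp g ts) = flat_map f ts) ->
  forall th ths u y, In y (f (isub th ths u)) <-> image_vars f th ths (ivars u) (isv u) y.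
Proof.
  intros fZ fS fP fA th ths u.
  induction u using iterm_ind'; simpl; intros y; rewrite ?fZ, ?fS, ?fP, ?fA; unfold image_vars.
  - split; [left; exists i; simpl; auto | intros [[x [[<-|[]] ?]]|[b [[] _]]]; auto].
  - split; [right; exists a; simpl; auto | intros [[x [[] _]]|[b [[<-|[]] ?]]]; auto].
  - split; [intros []| intros [[x [[] _]]|[b [[] _]]]].
  - apply IHu.
  - rewrite in_app_iff, IHu1, IHu2. symmetry. apply image_vars_app.
  - rewrite flat_map_concat_map, map_map, <- flat_map_concat_map, in_flat_map.
    rewrite Forall_forall in H. split.
    + intros [w [Hw Hy]]. apply H in Hy; auto.
      destruct Hy as [[x [? ?]]|[a [? ?]]]; [left|right];
        (exists x || exists a); split; auto; apply in_flat_map; eauto.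
    + intros [[x [Hx ?]]|[a [Ha ?]]];
        [apply in_flat_map in Hx; destruct Hx as [w [Hw Hx]]
        |apply in_flat_map in Ha; destruct Ha as [w [Hw Ha]]];
        exists w; split; auto; apply H; auto; unfold image_vars; eauto.
Qed.

Lemma In_ivars_isub th ths u y :
  In y (ivars (isub th ths u)) <-> image_vars ivars th ths (ivars u) (isv u) y.
Proof. now apply In_vars_isub. Qed.

Lemma In_isv_isub th ths u y :
  In y (isv (isub th ths u)) <-> image_vars isv th ths (ivars u) (isv u) y.
Proof. now apply In_vars_isub. Qed.

Lemma isub_ground_value xi u c :
  isv (isub IVar (xis xi) u) = [] -> In c (isv u) -> exists t, xi c = Some t /\ isv t = [].
Proof.
  intros G Hc. unfold xis in G.
  destruct (xi c) as [t|] eqn:E; [exists t; split; auto|];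
    [destruct (isv t) as [|d l] eqn:Et; auto|]; exfalso.
  - assert (Hd : In d (isv (isub IVar (xis xi) u))).
    { apply In_isv_isub. right. exists c. unfold xis. rewrite E, Et. simpl; auto. }
    unfold xis in Hd. rewrite G in Hd. destruct Hd.
  - assert (Hd : In c (isv (isub IVar (xis xi) u))).
    { apply In_isv_isub. right. exists c. unfold xis. rewrite E. simpl; auto. }
    unfold xis in Hd. rewrite G in Hd. destruct Hd.
Qed.

(** * Substitution on types *)

Lemma upd_comp (F : iterm -> iterm) th js ts x :
  F (upd th js ts x) = upd (fun y => F (th y)) js (map F ts) x.
Proof.
  revert ts; induction js; destruct ts; simpl; auto. destruct (x =? a); auto.
Qed.

Lemma upd_notin th js ts x : ~ In x js -> upd th js ts x = th x.
Proof.
  revert ts; induction js; destruct ts; simpl; intros; auto.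
  destruct (Nat.eqb_spec x a); [exfalso; auto | apply IHjs; auto].
Qed.

Lemma upd_ext th th' js ts x :
  length ts = length js -> (~ In x js -> th x = th' x) -> upd th js ts x = upd th' js ts x.
Proof.
  revert ts; induction js; destruct ts; simpl; intros; auto; try discriminate.
  destruct (Nat.eqb_spec x a); auto. apply IHjs; auto. intro; apply H0; intros [|]; auto.
Qed.

Lemma map_upd_self th ks vs :
  NoDup ks -> length vs = length ks -> map (upd th ks vs) ks = vs.
Proof.
  revert vs; induction ks; destruct vs; simpl; intros; auto; try discriminate.
  rewrite Nat.eqb_refl. inversion H; subst. f_equal.
  transitivity (map (upd th ks vs) ks); [|apply IHks; auto]. apply map_ext_in. intros x Hx.
  destruct (Nat.eqb_spec x a); subst; [contradiction | auto].
Qed.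

Lemma upd_in_range th js ts x : In x js -> length ts = length js -> In (upd th js ts x) ts.
Proof.
  revert ts; induction js; destruct ts; simpl; intros; try discriminate; [destruct H|].
  destruct (Nat.eqb_spec x a); auto. right; apply IHjs; auto. destruct H; auto; congruence.
Qed.

Lemma upd_map_IVar th js ks x :
  In x js -> length ks = length js ->
  exists k, In k ks /\ upd th js (map IVar ks) x = IVar k.
Proof.
  intros Hx Hlen. destruct (proj1 (in_map_iff IVar ks _) (upd_in_range th js (map IVar ks) x Hx
    ltac:(rewrite length_map; auto))) as [k [E Hk]]. eauto.
Qed.

Lemma upd_IVar_map_IVar js ks x : exists k, upd IVar js (map IVar ks) x = IVar k.
Proof.
  revert ks; induction js; destruct ks; simpl; eauto. destruct (x =? a); eauto.
Qed.

Lemma upd_map_IVar_self f js x : In x js -> upd f js (map IVar js) x = IVar x.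
Proof.
  induction js; simpl; intros H; [destruct H|].
  destruct (Nat.eqb_spec x a); subst; auto. apply IHjs. destruct H; auto. congruence.
Qed.

Lemma In_tfv y is r : In y (tfv (TAll is r)) <-> In y (mfv r) /\ ~ In y is.
Proof.
  simpl. rewrite filter_In, Bool.negb_true_iff, <- Bool.not_true_iff_false, existsb_exists.
  split; intros [H1 H2]; split; auto.
  - intro Hin. apply H2. exists y. auto using Nat.eqb_refl.
  - intros [z [Hz E]]. apply Nat.eqb_eq in E; subst; contradiction.
Qed.

Scheme msubst_min := Minimality for msubst Sort Prop
  with tsubst_min := Minimality for tsubst Sort Prop.
Combined Scheme subst_mut from msubst_min, tsubst_min.

Scheme mono_ind' := Induction for mono Sort Prop
  with ty_ind' := Induction for ty Sort Prop.
Combined Scheme mono_ty_ind from mono_ind', ty_ind'.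

Lemma subst_vars th ths :
  (forall r r', msubst th ths r r' -> forall y,
     (In y (mfv r') <-> image_vars ivars th ths (mfv r) (msv r) y) /\
     (In y (msv r') <-> image_vars isv th ths (mfv r) (msv r) y)) /\
  (forall s s', tsubst th ths s s' -> forall y,
     (In y (tfv s') <-> image_vars ivars th ths (tfv s) (tsv s) y) /\
     (In y (tsv s') <-> image_vars isv th ths (tfv s) (tsv s) y)).
Proof.
  revert th ths; apply subst_mut; intros.
  - split; [apply In_ivars_isub | apply In_isv_isub].
  - simpl. destruct (H0 y) as [A1 A2], (H2 y) as [B1 B2].
    rewrite !in_app_iff, A1, A2, B1, B2, !image_vars_app. tauto.
  - simpl. destruct (H0 y) as [A1 A2], (H2 y) as [B1 B2].
    rewrite !in_app_iff, A1, A2, B1, B2, !image_vars_app. tauto.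
  - rename H into Lk, H1 into Cap1, H2 into Cap2, H4 into IH.
    cbn [tsv]. destruct (IH y) as [A1 A2]. rewrite In_tfv, A1, A2.
    unfold image_vars. split; split.
    + intros [[[x [Hx Hy]]|[a [Ha Hy]]] Hn]; [|right; eauto].
      destruct (in_dec Nat.eq_dec x is) as [Hi|Hi].
      * destruct (upd_map_IVar th is ks x Hi Lk) as [k [Hk E]].
        rewrite E in Hy. destruct Hy as [<-|[]]. contradiction.
      * rewrite upd_notin in Hy by auto. left. exists x. rewrite In_tfv. auto.
    + intros [[x [Hx Hy]]|[a [Ha Hy]]].
      * pose proof Hx as [Hx' Hn]%In_tfv.
        split; [left; exists x; rewrite upd_notin; auto | intro Hk; eapply Cap1; eauto].
      * split; [right; eauto | intro Hk; eapply Cap2; eauto].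
    + intros [[x [Hx Hy]]|[a [Ha Hy]]]; [|right; eauto].
      destruct (in_dec Nat.eq_dec x is) as [Hi|Hi].
      * destruct (upd_map_IVar th is ks x Hi Lk) as [k [Hk E]]. rewrite E in Hy. destruct Hy.
      * rewrite upd_notin in Hy by auto. left. exists x. rewrite In_tfv. auto.
    + intros [[x [[Hx Hn]%In_tfv Hy]]|[a [Ha Hy]]]; [|right; eauto].
      left. exists x. rewrite upd_notin; auto.
Qed.

Lemma msubst_sv th ths r r' y : msubst th ths r r' ->
  In y (msv r') <-> image_vars isv th ths (mfv r) (msv r) y.
Proof. intros H. apply (proj1 (subst_vars th ths) r r' H). Qed.

Lemma tsubst_fv th ths s s' y : tsubst th ths s s' ->
  In y (tfv s') <-> image_vars ivars th ths (tfv s) (tsv s) y.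
Proof. intros H. apply (proj2 (subst_vars th ths) s s' H). Qed.

Lemma tsubst_sv th ths s s' y : tsubst th ths s s' ->
  In y (tsv s') <-> image_vars isv th ths (tfv s) (tsv s) y.
Proof. intros H. apply (proj2 (subst_vars th ths) s s' H). Qed.

Lemma subst_ext th ths :
  (forall r r', msubst th ths r r' -> forall th' ths',
     (forall x, In x (mfv r) -> th x = th' x) -> (forall a, In a (msv r) -> ths a = ths' a) ->
     msubst th' ths' r r') /\
  (forall s s', tsubst th ths s s' -> forall th' ths',
     (forall x, In x (tfv s) -> th x = th' x) -> (forall a, In a (tsv s) -> ths a = ths' a) ->
     tsubst th' ths' s s').
Proof.
  revert th ths; apply subst_mut; intros; simpl in *.
  - rewrite (isub_ext th ths th' ths'); auto. constructor.
  - constructor; [apply H0 | apply H2]; intros; auto using in_or_app.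
  - constructor; [apply H0 | apply H2]; intros; auto using in_or_app.
  - rename H into Lk, H4 into IH, H5 into Hth, H6 into Hths.
    constructor; auto.
    + intros k x Hk Hx. rewrite <- Hth; auto.
    + intros k a Hk Ha. rewrite <- Hths; auto.
    + apply IH; auto. intros x Hx. apply upd_ext; [rewrite length_map; auto|].
      intros Hn. apply Hth, In_tfv; auto.
Qed.

Lemma msubst_ext th ths th' ths' r r' : msubst th ths r r' ->
  (forall x, In x (mfv r) -> th x = th' x) -> (forall a, In a (msv r) -> ths a = ths' a) ->
  msubst th' ths' r r'.
Proof. intros H. exact (proj1 (subst_ext th ths) r r' H th' ths'). Qed.

Lemma tsubst_ext th ths th' ths' s s' : tsubst th ths s s' ->
  (forall x, In x (tfv s) -> th x = th' x) -> (forall a, In a (tsv s) -> ths a = ths' a) ->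
  tsubst th' ths' s s'.
Proof. intros H. exact (proj2 (subst_ext th ths) s s' H th' ths'). Qed.

Lemma subst_comp th1 ths1 :
  (forall r r1, msubst th1 ths1 r r1 -> forall th2 ths2 r2, msubst th2 ths2 r1 r2 ->
     msubst (fun x => isub th2 ths2 (th1 x)) (fun a => isub th2 ths2 (ths1 a)) r r2) /\
  (forall s s1, tsubst th1 ths1 s s1 -> forall th2 ths2 s2, tsubst th2 ths2 s1 s2 ->
     tsubst (fun x => isub th2 ths2 (th1 x)) (fun a => isub th2 ths2 (ths1 a)) s s2).
Proof.
  revert th1 ths1; apply subst_mut; intros.
  - inversion H; subst. rewrite isub_isub. constructor.
  - inversion H3; subst. constructor; eauto.
  - inversion H3; subst. constructor; eauto.
  - rename th into th1, ths into ths1, H into Lk, H0 into NDk, H1 into Cap1, H2 into Cap2,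
      H3 into Hr1, H4 into IH, H5 into Hs2.
    pose proof (ts_all _ _ _ _ _ _ Lk NDk Cap1 Cap2 Hr1) as T1.
    inversion Hs2 as [? ks2 ? r2' Lk2 NDk2 Hf1 Hf2 Hr]; subst.
    constructor; auto; try congruence.
    + intros k x Hk Hx. rewrite In_ivars_isub. intros [[y [Hy Hk']]|[b [Hb Hk']]].
      * eapply Hf1; eauto. apply (tsubst_fv _ _ _ _ _ T1). left; eauto.
      * eapply Hf2; eauto. apply (tsubst_sv _ _ _ _ _ T1). left; eauto.
    + intros k a Hk Ha. rewrite In_ivars_isub. intros [[y [Hy Hk']]|[b [Hb Hk']]].
      * eapply Hf1; eauto. apply (tsubst_fv _ _ _ _ _ T1). right; eauto.
      * eapply Hf2; eauto. apply (tsubst_sv _ _ _ _ _ T1). right; eauto.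
    + eapply msubst_ext; [exact (IH _ _ _ Hr) | |].
      * intros x Hx. cbv beta. rewrite upd_comp, map_map. simpl.
        rewrite map_upd_self by (rewrite ?length_map; congruence).
        apply upd_ext; [rewrite length_map; congruence|]. intros Hn.
        apply isub_ext; auto. intros y Hy. apply upd_notin. intros Hk.
        eapply Cap1; eauto. apply In_tfv; auto.
      * intros a Ha. apply isub_ext; auto. intros y Hy. apply upd_notin.
        intros Hk. eapply Cap2; eauto.
Qed.

Lemma msubst_comp th1 ths1 th2 ths2 r r1 r2 :
  msubst th1 ths1 r r1 -> msubst th2 ths2 r1 r2 ->
  msubst (fun x => isub th2 ths2 (th1 x)) (fun a => isub th2 ths2 (ths1 a)) r r2.
Proof. intros H. exact (proj1 (subst_comp th1 ths1) r r1 H th2 ths2 r2). Qed.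

Lemma tsubst_comp th1 ths1 th2 ths2 s s1 s2 :
  tsubst th1 ths1 s s1 -> tsubst th2 ths2 s1 s2 ->
  tsubst (fun x => isub th2 ths2 (th1 x)) (fun a => isub th2 ths2 (ths1 a)) s s2.
Proof. intros H. exact (proj2 (subst_comp th1 ths1) s s1 H th2 ths2 s2). Qed.

Lemma subst_factor th ths :
  (forall r r1, msubst th ths r r1 -> forall th' ths' r2, msubst th' ths' r r2 ->
     forall sg sgs, (forall x, In x (mfv r) -> th' x = isub sg sgs (th x)) ->
     (forall a, In a (msv r) -> ths' a = isub sg sgs (ths a)) -> msubst sg sgs r1 r2) /\
  (forall s s1, tsubst th ths s s1 -> forall th' ths' s2, tsubst th' ths' s s2 ->
     forall sg sgs, (forall x, In x (tfv s) -> th' x = isub sg sgs (th x)) ->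
     (forall a, In a (tsv s) -> ths' a = isub sg sgs (ths a)) -> tsubst sg sgs s1 s2).
Proof.
  revert th ths; apply subst_mut; intros.
  - inversion H; subst. simpl in *.
    replace (isub th' ths' a) with (isub sg sgs (isub th ths a)); [constructor|].
    rewrite isub_isub. symmetry. apply isub_ext; auto.
  - inversion H3; subst. simpl in *. constructor; [eapply H0 | eapply H2]; eauto;
      intros; (apply H4 || apply H5); auto using in_or_app.
  - inversion H3; subst. simpl in *. constructor; [eapply H0 | eapply H2]; eauto;
      intros; (apply H4 || apply H5); auto using in_or_app.
  - rename H into Lk, H0 into NDk, H1 into Cap1, H2 into Cap2, H3 into Hr1, H4 into IH,
      H5 into Hs2, H6 into Hth, H7 into Hths.
    pose proof (ts_all _ _ _ _ _ _ Lk NDk Cap1 Cap2 Hr1) as T1.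
    inversion Hs2 as [? ks2 ? r2' Lk2 NDk2 Hg1 Hg2 Hr]; subst.
    constructor; auto; try congruence.
    + intros k y Hk Hy Hk'. apply (tsubst_fv _ _ _ _ _ T1) in Hy.
      destruct Hy as [[x [Hx Hy]]|[a [Ha Hy]]].
      * apply (Hg1 k x Hk Hx). rewrite Hth by auto. apply In_ivars_isub. left; eauto.
      * apply (Hg2 k a Hk Ha). rewrite Hths by auto. apply In_ivars_isub. left; eauto.
    + intros k b Hk Hb Hk'. apply (tsubst_sv _ _ _ _ _ T1) in Hb.
      destruct Hb as [[x [Hx Hy]]|[a [Ha Hy]]].
      * apply (Hg1 k x Hk Hx). rewrite Hth by auto. apply In_ivars_isub. right; eauto.
      * apply (Hg2 k a Hk Ha). rewrite Hths by auto. apply In_ivars_isub. right; eauto.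
    + eapply IH; [exact Hr| |].
      * intros x Hx. cbv beta. rewrite upd_comp, map_map. simpl.
        rewrite map_upd_self by (rewrite ?length_map; congruence).
        apply upd_ext; [rewrite length_map; congruence|]. intros Hn.
        rewrite Hth by (apply In_tfv; auto).
        apply isub_ext; auto. intros y Hy. symmetry. apply upd_notin. intros Hk.
        eapply Cap1; eauto. apply In_tfv; auto.
      * intros a Ha. rewrite Hths by auto. apply isub_ext; auto. intros y Hy. symmetry.
        apply upd_notin. intros Hk. eapply Cap2; eauto.
Qed.

Lemma msubst_factor th ths th' ths' sg sgs r r1 r2 :
  msubst th ths r r1 -> msubst th' ths' r r2 ->
  (forall x, In x (mfv r) -> th' x = isub sg sgs (th x)) ->
  (forall a, In a (msv r) -> ths' a = isub sg sgs (ths a)) -> msubst sg sgs r1 r2.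
Proof. intros H1 H2. exact (proj1 (subst_factor th ths) r r1 H1 th' ths' r2 H2 sg sgs). Qed.

Lemma tsubst_factor th ths th' ths' sg sgs s s1 s2 :
  tsubst th ths s s1 -> tsubst th' ths' s s2 ->
  (forall x, In x (tfv s) -> th' x = isub sg sgs (th x)) ->
  (forall a, In a (tsv s) -> ths' a = isub sg sgs (ths a)) -> tsubst sg sgs s1 s2.
Proof. intros H1 H2. exact (proj2 (subst_factor th ths) s s1 H1 th' ths' s2 H2 sg sgs). Qed.

Lemma fresh_list (L : list nat) n :
  exists ks, length ks = n /\ NoDup ks /\ forall k, In k ks -> ~ In k L.
Proof.
  exists (seq (S (list_max L)) n). split; [apply length_seq|]. split; [apply seq_NoDup|].
  intros k [Hk _]%in_seq HL.
  pose proof (proj1 (list_max_le L (list_max L)) (le_n _)) as HM.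
  rewrite Forall_forall in HM. specialize (HM k HL). lia.
Qed.

Lemma subst_exists :
  (forall r th ths, exists r', msubst th ths r r') /\
  (forall s th ths, exists s', tsubst th ths s s').
Proof.
  apply mono_ty_ind; intros.
  - eexists; constructor.
  - destruct (H th ths) as [a Ha], (H0 th ths) as [b Hb]. eexists; constructor; eauto.
  - destruct (H th ths) as [a Ha], (H0 th ths) as [b Hb]. eexists; constructor; eauto.
  - destruct (fresh_list (flat_map (fun x => ivars (th x)) (tfv (TAll is r)) ++
       flat_map (fun a => ivars (ths a)) (msv r)) (length is)) as [ks [L1 [L2 L3]]].
    destruct (H (upd th is (map IVar ks)) ths) as [r' Hr]. exists (TAll ks r').
    constructor; auto; intros k x Hk Hx Hk'; apply (L3 k Hk), in_or_app;
      [left | right]; apply in_flat_map; eauto.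
Qed.

Lemma msubst_exists th ths r : exists r', msubst th ths r r'.
Proof. apply subst_exists. Qed.

Lemma tsubst_exists th ths s : exists s', tsubst th ths s s'.
Proof. apply subst_exists. Qed.

Lemma subst_wf th ths :
  (forall r r', msubst th ths r r' -> wfm r -> wfm r') /\
  (forall s s', tsubst th ths s s' -> wft s -> wft s').
Proof.
  revert th ths; apply subst_mut; simpl; intros; try tauto.
  destruct H5 as [ND [Har W]]. repeat split; auto.
  intros Hks. assert (His : is <> []) by (intros ->; destruct ks; simpl in *; congruence).
  specialize (Har His). inversion H3; subst; simpl in *; auto.
Qed.

Lemma msubst_wf th ths r r' : msubst th ths r r' -> wfm r -> wfm r'.
Proof. apply subst_wf. Qed.

Lemma tsubst_wf th ths s s' : tsubst th ths s s' -> wft s -> wft s'.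
Proof. apply subst_wf. Qed.

Lemma tsubst_TAll_same_binders ths is r r' :
  NoDup is -> (forall i a, In i is -> In a (msv r) -> ~ In i (ivars (ths a))) ->
  msubst IVar ths r r' -> tsubst IVar ths (TAll is r) (TAll is r').
Proof.
  intros ND Hcap Hr. apply ts_all; auto.
  - intros k x Hk [_ Hx]%In_tfv [->|[]]. contradiction.
  - eapply msubst_ext; [exact Hr| |]; auto. intros x _.
    destruct (in_dec Nat.eq_dec x is); symmetry; [apply upd_map_IVar_self | apply upd_notin]; auto.
Qed.

Lemma subst_refl :
  (forall r, wfm r -> msubst IVar SVar r r) /\ (forall s, wft s -> tsubst IVar SVar s s).
Proof.
  apply mono_ty_ind; intros.
  - rewrite <- (isub_id a) at 2. constructor.
  - simpl in *; constructor; tauto.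
  - simpl in *; constructor; tauto.
  - destruct H0 as [ND [_ W]]. apply tsubst_TAll_same_binders; auto.
Qed.

Lemma aeq_refl s : wft s -> aeq s s.
Proof. apply subst_refl. Qed.

Lemma tsubst_aeq th ths s s1 s2 : tsubst th ths s s1 -> aeq s1 s2 -> tsubst th ths s s2.
Proof.
  unfold aeq; intros H1 H2. eapply tsubst_ext; [exact (tsubst_comp _ _ _ _ _ _ _ H1 H2)| |];
    intros; apply isub_id.
Qed.

Lemma aeq_trans s1 s2 s3 : aeq s1 s2 -> aeq s2 s3 -> aeq s1 s3.
Proof. apply tsubst_aeq. Qed.

Lemma tsubst_unique th ths s s1 s2 : tsubst th ths s s1 -> tsubst th ths s s2 -> aeq s1 s2.
Proof. unfold aeq; intros. eapply tsubst_factor; eauto; intros; rewrite isub_id; auto. Qed.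

Lemma aeq_tsubst th ths s s1 s2 : aeq s s1 -> tsubst th ths s1 s2 -> tsubst th ths s s2.
Proof.
  unfold aeq; intros H1 H2.
  eapply tsubst_ext; [exact (tsubst_comp _ _ _ _ _ _ _ H1 H2)| |]; reflexivity.
Qed.

Fixpoint msize (r : mono) : nat :=
  match r with
  | TBase _ _ => 1
  | TProd r1 r2 => S (msize r1 + msize r2)
  | TArr s r => S (tsize s + msize r)
  end
with tsize (s : ty) : nat :=
  match s with TAll _ r => S (msize r) end.

Lemma msubst_size th ths r r' : msubst th ths r r' -> msize r' = msize r.
Proof.
  revert r r'; apply (subst_mut (fun _ _ r r' => msize r' = msize r)
    (fun _ _ s s' => tsize s' = tsize s)); simpl; auto.
Qed.

Lemma tsubst_IVar_fv_notin ths s s' i :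
  tsubst IVar ths s s' -> ~ In i (tfv s) ->
  (forall a, In a (tsv s) -> ~ In i (ivars (ths a))) -> ~ In i (tfv s').
Proof.
  intros H Hs Hths [[x [Hx [->|[]]]]|[a [Ha Hi]]]%(tsubst_fv _ _ _ _ _ H);
    [apply Hs | apply (Hths a)]; auto.
Qed.

Lemma msubst_SVar_sv th r r' b : msubst th SVar r r' -> In b (msv r) -> In b (msv r').
Proof. intros H Hb. apply (msubst_sv _ _ _ _ _ H). right. exists b. simpl; auto. Qed.

Lemma msubst_rename_sv th r r' b :
  (forall x, exists k, th x = IVar k) -> msubst th SVar r r' ->
  In b (msv r') <-> In b (msv r).
Proof.
  intros Hth H. split; [|apply (msubst_SVar_sv _ _ _ _ H)].
  intros [[x [_ Hb]]|[a [Ha [<-|[]]]]]%(msubst_sv _ _ _ _ _ H); auto.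
  destruct (Hth x) as [k E]. rewrite E in Hb. destruct Hb.
Qed.

Lemma msubst_svars_sv js alphas r r' b :
  length alphas = length js -> msubst (upd IVar js (map SVar alphas)) SVar r r' ->
  In b (msv r') -> In b (msv r) \/ In b alphas.
Proof.
  intros Hlen H [[x [_ Hb]]|[a [Ha [<-|[]]]]]%(msubst_sv _ _ _ _ _ H); auto.
  destruct (in_dec Nat.eq_dec x js) as [Hi|Hi].
  - pose proof (upd_in_range IVar js (map SVar alphas) x Hi) as Hr.
    rewrite length_map in Hr. apply in_map_iff in Hr; auto.
    destruct Hr as [c [Ec Hc]]. rewrite <- Ec in Hb. destruct Hb as [<-|[]]. auto.
  - rewrite upd_notin in Hb by auto. destruct Hb.
Qed.

Lemma aeq_tsv s s' a : aeq s s' -> In a (tsv s) <-> In a (tsv s').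
Proof.
  intros H. rewrite (tsubst_sv _ _ _ _ _ H). unfold image_vars. split.
  - intros Ha. right. exists a. simpl; auto.
  - intros [[x [_ []]]|[b [Hb [<-|[]]]]]; auto.
Qed.

Lemma msubst_inst_svars ths ths' js ks r rt alphas r' R :
  tsubst IVar ths (TAll js r) (TAll ks rt) ->
  msubst (upd IVar js (map SVar alphas)) SVar r r' ->
  msubst (upd IVar ks (map ths' alphas)) SVar rt R ->
  length alphas = length js ->
  (forall a, In a (msv r) -> ths' a = ths a) ->
  msubst IVar ths' r' R.
Proof.
  intros Ht Hr' HR Hlen Hths.
  inversion Ht as [? ? ? ? Lk NDk Hcap1 Hcap2 Hrt]; subst.
  eapply msubst_factor; [exact Hr' | exact (msubst_comp _ _ _ _ _ _ _ Hrt HR) | |].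
  - intros x Hx. rewrite !upd_comp, !map_map. simpl.
    rewrite map_upd_self by (rewrite ?length_map; congruence).
    apply upd_ext; [rewrite length_map; congruence|]. intros Hn.
    apply upd_notin. intros Hk. apply (Hcap1 x x Hk); [apply In_tfv | left]; auto.
  - intros a Ha. simpl. rewrite Hths by auto. rewrite <- (isub_id (ths a)) at 2.
    apply isub_ext; auto. intros y Hy. apply upd_notin. intros Hk. eapply Hcap2; eauto.
Qed.

(** * Soundness *)

Scheme inferm_min := Minimality for inferm Sort Prop
  with infert_min := Minimality for infert Sort Prop.
Combined Scheme infer_mut from inferm_min, infert_min.

Lemma model_app J xi Phi1 Phi2 :
  model J xi (Phi1 ++ Phi2) <-> model J xi Phi1 /\ model J xi Phi2.
Proof.
  unfold model; split.
  - intros H; split; intros; apply H, in_or_app; auto.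
  - intros [H1 H2] c [Hc|Hc]%in_app_or; [apply H1 | apply H2]; auto.
Qed.

Lemma In_notin_cs c is r :
  In c (notin_cs is r) <-> exists i a, c = CNotIn i a /\ In i is /\ In a (msv r).
Proof.
  unfold notin_cs. rewrite in_flat_map. split.
  - intros [i [Hi [a [<- Ha]]%in_map_iff]]. eauto.
  - intros [i [a [-> [Hi Ha]]]]. exists i. split; auto. apply in_map; auto.
Qed.

Lemma model_notin_cs J xi is r i a :
  model J xi (notin_cs is r) -> In i is -> In a (msv r) -> ~ In i (ivars (xis xi a)).
Proof.
  intros Hm Hi Ha. destruct (Hm (CNotIn i a)) as [t [E Ht]].
  - apply In_notin_cs. eauto.
  - unfold xis. rewrite E. auto.
Qed.

Lemma subt_all_sound J xi Phi is r1 js r2 alphas r2' rho' tau' :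
  wft (TAll is r1) -> wft (TAll js r2) -> length alphas = length js ->
  msubst (upd IVar js (map SVar alphas)) SVar r2 r2' ->
  (forall i, In i is -> ~ In i (tfv (TAll js r2))) ->
  model J xi (Phi ++ notin_cs is r1 ++ notin_cs is r2) ->
  (forall r1x r2x, model J xi Phi -> msubst IVar (xis xi) r1 r1x ->
     msubst IVar (xis xi) r2' r2x -> subm J r1x r2x) ->
  tsubst IVar (xis xi) (TAll is r1) rho' -> tsubst IVar (xis xi) (TAll js r2) tau' ->
  subt J rho' tau'.
Proof.
  intros [ND1 _] W2 Hlen Hr2' Hside [Hm [Hn1 Hn2]%model_app]%model_app IH Hrho Htau.
  destruct (msubst_exists IVar (xis xi) r1) as [r1x Hr1x].
  apply sub_alpha with (s1' := TAll is r1x) (s2' := tau').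
  - eapply tsubst_unique; [exact Hrho|].
    apply tsubst_TAll_same_binders; auto. intros. eapply model_notin_cs; [exact Hn1 | ..]; auto.
  - apply aeq_refl. eapply tsubst_wf; eauto.
  - inversion Htau as [? ks ? rt Lk _ _ _ Hrt]; subst.
    destruct (msubst_exists (upd IVar ks (map (xis xi) alphas)) SVar rt) as [R HR].
    apply sub_all with (r2 := R).
    + exists (map (xis xi) alphas). rewrite length_map. split; [congruence | auto].
    + apply IH; auto. eapply msubst_inst_svars; eauto.
    + intros i Hi. eapply tsubst_IVar_fv_notin; eauto.
      intros. eapply model_notin_cs; [exact Hn2 | ..]; auto.
Qed.

Lemma soundness :
  (forall Phi r1 r2 V, inferm Phi r1 r2 V -> wfm r1 -> wfm r2 ->
     forall J xi, model J xi Phi -> forall r1' r2',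
     msubst IVar (xis xi) r1 r1' -> msubst IVar (xis xi) r2 r2' -> subm J r1' r2') /\
  (forall Phi s1 s2 V, infert Phi s1 s2 V -> wft s1 -> wft s2 ->
     forall J xi, model J xi Phi -> forall s1' s2',
     tsubst IVar (xis xi) s1 s1' -> tsubst IVar (xis xi) s2 s2' -> subt J s1' s2').
Proof.
  apply infer_mut.
  - intros B a b _ _ J xi Hm r1' r2' S1 S2.
    inversion S1; inversion S2; subst. constructor. apply (Hm (CLe a b)). left; auto.
  - intros Phi1 Phi2 r1 r2 r3 r4 V1 V2 _ IH1 _ IH2 _ [W1 W2] [W3 W4] J xi
      [Hm1 Hm2]%model_app r1' r2' S1 S2.
    inversion S1; inversion S2; subst. constructor; [eapply IH1 | eapply IH2]; eauto.
  - intros Phi1 Phi2 s1 r1 s2 r2 V1 V2 _ IH1 _ IH2 _ [W1 W2] [W3 W4] J xi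
      [Hm1 Hm2]%model_app r1' r2' S1 S2.
    inversion S1; inversion S2; subst. constructor; [eapply IH1 | eapply IH2]; eauto.
  - intros Phi is r1 js r2 alphas r2' V Hlen _ _ Hr2' _ IH Hside W1 W2 J xi Hm s1' s2'.
    apply (subt_all_sound J xi Phi is r1 js r2 alphas r2'); auto.
    intros r1x r2x Hm' Hx1 Hx2.
    exact (IH (proj2 (proj2 W1)) (msubst_wf _ _ _ _ Hr2' (proj2 (proj2 W2))) J xi Hm' _ _ Hx1 Hx2).
  - intros Phi s1 s1' s2 s2' V A1 A2 _ IH W1 W2 J xi Hm t1 t2 S1 S2.
    assert (W1' : wft s1') by (eapply tsubst_wf; eauto).
    assert (W2' : wft s2') by (eapply tsubst_wf; eauto).
    destruct (tsubst_exists IVar (xis xi) s1') as [u1 U1].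
    destruct (tsubst_exists IVar (xis xi) s2') as [u2 U2].
    apply sub_alpha with (s1' := u1) (s2' := u2); [| | eapply IH; eauto];
      eapply tsubst_unique; eauto; eapply aeq_tsubst; eauto.
Qed.

(** * Completeness *)

Scheme subm_min := Minimality for subm Sort Prop
  with subt_min := Minimality for subt Sort Prop.
Combined Scheme sub_mut from subm_min, subt_min.

Lemma sub_ground J :
  (forall r1 r2, subm J r1 r2 -> (forall a, ~ In a (msv r1)) /\ (forall a, ~ In a (msv r2))) /\
  (forall s1 s2, subt J s1 s2 -> (forall a, ~ In a (tsv s1)) /\ (forall a, ~ In a (tsv s2))).
Proof.
  apply sub_mut; intros.
  - destruct H as [E1 [E2 _]]. simpl. rewrite E1, E2. simpl; auto.
  - simpl. destruct H0, H2. split; intros a [Ha|Ha]%in_app_or; firstorder.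
  - simpl. destruct H0, H2. split; intros a [Ha|Ha]%in_app_or; firstorder.
  - destruct H1 as [G1 G2]. split; [exact G1|]. destruct s2 as [js t].
    destruct H as [as_ [_ Hm]]. intros a Ha. apply (G2 a).
    apply (msubst_sv _ _ _ _ _ Hm). right. exists a. split; simpl; auto.
  - destruct H2 as [G1 G2].
    split; intros a Ha; [apply (G1 a); apply (tsubst_sv _ _ _ _ _ H)
                        |apply (G2 a); apply (tsubst_sv _ _ _ _ _ H0)];
      right; exists a; simpl; auto.
Qed.

Lemma tsubst_ground_defined th xi s s' a :
  tsubst th (xis xi) s s' -> (forall b, ~ In b (tsv s')) -> In a (tsv s) -> xi a <> None.
Proof.
  intros H G Ha E. apply (G a), (tsubst_sv _ _ _ _ _ H). right. exists a. split; auto.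
  unfold xis; rewrite E; simpl; auto.
Qed.

Definition cvars (c : constr) : list nat :=
  match c with CLe a b => isv a ++ isv b | CNotIn _ a => [a] end.

Lemma infer_svars :
  (forall Phi r1 r2 V, inferm Phi r1 r2 V ->
     (forall a, In a (msv r1) \/ In a (msv r2) -> In a V) /\
     (forall c, In c Phi -> forall a, In a (cvars c) -> In a V)) /\
  (forall Phi s1 s2 V, infert Phi s1 s2 V ->
     (forall a, In a (tsv s1) \/ In a (tsv s2) -> In a V) /\
     (forall c, In c Phi -> forall a, In a (cvars c) -> In a V)).
Proof.
  apply infer_mut; intros.
  - split; simpl.
    + intros; apply in_or_app; tauto.
    + intros c [<-|[]] x Hx. auto.
  - destruct H0 as [A1 A2], H2 as [B1 B2]. simpl. split.
    + intros a. rewrite !in_app_iff. firstorder.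
    + intros c [Hc|Hc]%in_app_or a Ha; apply in_or_app; eauto.
  - destruct H0 as [A1 A2], H2 as [B1 B2]. simpl. split.
    + intros a. rewrite !in_app_iff. firstorder.
    + intros c [Hc|Hc]%in_app_or a Ha; apply in_or_app; eauto.
  - destruct H4 as [A1 A2]. simpl. split.
    + intros a. rewrite !in_app_iff. tauto.
    + intros c Hc a Ha. rewrite !in_app_iff in Hc |- *.
      destruct Hc as [Hc|[Hc|Hc]]; [eauto | |];
        apply In_notin_cs in Hc; destruct Hc as [i [b [-> [_ Hb]]]];
        destruct Ha as [<-|[]]; tauto.
  - destruct H2 as [A1 A2]. split; auto. intros a Ha. apply A1.
    rewrite <- (aeq_tsv _ _ a H), <- (aeq_tsv _ _ a H0). auto.
Qed.

Lemma model_ext J xi xi' Phi :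
  model J xi Phi -> (forall c, In c Phi -> forall a, In a (cvars c) -> xi a = xi' a) ->
  model J xi' Phi.
Proof.
  intros Hm Hag c Hc. specialize (Hm c Hc). specialize (Hag c Hc).
  destruct c as [a b | i a]; simpl in *.
  - rewrite <- (isub_ext IVar (xis xi) IVar (xis xi') a), <- (isub_ext IVar (xis xi) IVar (xis xi') b);
      auto; intros; unfold xis; rewrite Hag; auto using in_or_app.
  - rewrite <- Hag; auto.
Qed.

Lemma subt_inv J s1 s2 : subt J s1 s2 -> wft s1 -> wft s2 ->
  exists is r1 s2' r2, aeq s1 (TAll is r1) /\ aeq s2 s2' /\ inst s2' r2 /\ subm J r1 r2 /\
    (forall i, In i is -> ~ In i (tfv s2')).
Proof.
  induction 1 as [is r1 s2 r2 ? ? ? | s1 s1' s2 s2' A1 A2 _ IH]; intros W1 W2.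
  - exists is, r1, s2, r2. split; [apply aeq_refl; auto|]. split; [apply aeq_refl|]; auto.
  - destruct IH as [is [r1 [s2'' [r2 [B1 [B2 P]]]]]];
      [eapply tsubst_wf; eauto | eapply tsubst_wf; eauto |].
    exists is, r1, s2'', r2. split; [|split]; auto; eapply aeq_trans; eauto.
Qed.

Definition restr (xi : sosubst) (S : list nat) : sosubst :=
  fun a => if in_dec Nat.eq_dec a S then xi a else None.

Definition merge (xi1 xi2 : sosubst) : sosubst :=
  fun a => match xi1 a with Some t => Some t | None => xi2 a end.

(* The variables of [V] outside [S] are fresh: they lie in [[N, M)]. *)
Definition model_extension (J : interp) (xi : sosubst) (N M : nat) (S : list nat)
  (Phi : socp) (V : list nat) : Prop :=
  exists xi', is_sosubst xi' /\ (forall a, In a S -> xi' a = xi a) /\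
    (forall a, xi' a <> None <-> In a V) /\ model J xi' Phi /\
    (forall a, In a V -> In a S \/ (N <= a /\ a < M)).

Section Combine.
Variables (J : interp) (xi : sosubst) (N M1 M2 : nat) (S S1 S2 : list nat).
Variables (Phi1 Phi2 : socp) (V1 V2 : list nat).
Hypothesis S_union : forall a, In a S <-> In a S1 \/ In a S2.
Hypothesis S_bound : forall a, In a S -> a < N.
Hypothesis ME1 : model_extension J xi N M1 S1 Phi1 V1.
Hypothesis ME2 : model_extension J xi (max N M1) M2 S2 Phi2 V2.

Lemma model_extension_shared : shared_ok V1 V2 S.
Proof.
  destruct ME1 as [xi1 [_ [_ [_ [_ K1]]]]], ME2 as [xi2 [_ [_ [_ [_ K2]]]]].
  intros a Ha1 Ha2. apply S_union.
  destruct (K1 a Ha1) as [|Hb]; auto. destruct (K2 a Ha2) as [|Hc]; auto. lia.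
Qed.

Lemma model_extension_app :
  (forall c, In c Phi1 -> forall a, In a (cvars c) -> In a V1) ->
  (forall c, In c Phi2 -> forall a, In a (cvars c) -> In a V2) ->
  model_extension J xi N (max M1 M2) S (Phi1 ++ Phi2) (V1 ++ V2).
Proof.
  intros HP1 HP2.
  destruct ME1 as [xi1 [I1 [E1 [D1 [Mo1 K1]]]]], ME2 as [xi2 [I2 [E2 [D2 [Mo2 K2]]]]].
  assert (V1_S1 : forall a, In a S -> In a V1 -> In a S1).
  { intros a Ha Hv. destruct (K1 a Hv) as [|Hb]; auto. specialize (S_bound a Ha). lia. }
  assert (V2_S2 : forall a, In a S -> In a V2 -> In a S2).
  { intros a Ha Hv. destruct (K2 a Hv) as [|Hb]; auto. specialize (S_bound a Ha). lia. }
  assert (xi1_S : forall a, In a S -> xi1 a <> None -> xi1 a = xi a).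
  { intros a Ha Hn. apply E1, V1_S1, D1; auto. }
  assert (xi1_V2 : forall a, In a V2 -> xi1 a <> None -> xi1 a = xi2 a).
  { intros a Hv2 Hn. assert (Hv1 : In a V1) by (apply D1; auto).
    destruct (proj1 (S_union a) (model_extension_shared a Hv1 Hv2)) as [Ha|Ha].
    - rewrite E1 by auto. rewrite E2; auto.
      destruct (K2 a Hv2) as [|Hb]; auto.
      assert (a < N) by (apply S_bound, S_union; auto). lia.
    - rewrite E2 by auto. apply E1, V1_S1; auto. apply S_union; auto. }
  exists (merge xi1 xi2). unfold merge. split; [|split; [|split; [|split]]].
  - intros a t. destruct (xi1 a) eqn:E; [intros [= <-]; eapply I1; eauto | apply I2].
  - intros a Ha. destruct (xi1 a) eqn:E.
    + rewrite <- E. apply xi1_S; congruence.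
    + destruct (xi2 a) eqn:E2a.
      * rewrite <- E2a. apply E2, V2_S2; auto. apply D2; congruence.
      * destruct (proj1 (S_union a) Ha) as [Hb|Hb]; [rewrite <- E1 | rewrite <- E2]; auto.
  - intros a. rewrite in_app_iff, <- D1, <- D2. destruct (xi1 a); [|tauto].
    split; [left; congruence | congruence].
  - intros c [Hc|Hc]%in_app_or.
    + refine (model_ext J xi1 _ Phi1 Mo1 _ c Hc). intros c' Hc' a Ha.
      destruct (xi1 a) eqn:E; auto. exfalso. apply (proj2 (D1 a)); eauto.
    + refine (model_ext J xi2 _ Phi2 Mo2 _ c Hc). intros c' Hc' a Ha.
      destruct (xi1 a) eqn:E; auto. rewrite <- E. symmetry. apply xi1_V2; eauto. congruence.
  - intros a [Ha|Ha]%in_app_or.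
    + destruct (K1 a Ha); [left; apply S_union; auto | right; lia].
    + destruct (K2 a Ha); [left; apply S_union; auto | right; lia].
Qed.
End Combine.

Definition svar_extend (xi : sosubst) (N : nat) (ts : list iterm) : sosubst :=
  fun a => if a <? N then xi a else nth_error ts (a - N).

Lemma svar_extend_lt xi N ts a : a < N -> svar_extend xi N ts a = xi a.
Proof. intros H. unfold svar_extend. destruct (Nat.ltb_spec a N); [auto | lia]. Qed.

Lemma map_xis_svar_extend xi N ts : map (xis (svar_extend xi N ts)) (seq N (length ts)) = ts.
Proof.
  apply nth_ext with (d := IZero) (d' := IZero); rewrite length_map, length_seq; auto.
  intros m Hm. rewrite nth_indep with (d' := xis (svar_extend xi N ts) 0)
    by (rewrite length_map, length_seq; auto).
  rewrite map_nth, seq_nth by auto. unfold xis, svar_extend.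
  destruct (Nat.ltb_spec (N + m) N); [lia|].
  replace (N + m - N) with m by lia. rewrite (nth_error_nth' ts IZero Hm). auto.
Qed.

Lemma model_extension_all J xi xi_full N L M Phi V is r1 r1a r2 r2' :
  (forall a, In a (msv r1 ++ msv r2) -> a < N) ->
  (forall a, In a (msv r1 ++ msv r2) -> xi a <> None) ->
  (forall a, a < N -> xi_full a = xi a) ->
  (forall a, In a (msv r1a) <-> In a (msv r1)) ->
  (forall a, In a (msv r2') -> In a (msv r2) \/ (N <= a /\ a < N + L)) ->
  (forall a, In a (msv r2) -> In a (msv r2')) ->
  (forall a, In a (msv r1a) \/ In a (msv r2') -> In a V) ->
  (forall i a, In i is -> In a (msv r1 ++ msv r2) -> ~ In i (ivars (xis xi a))) ->
  model_extension J xi_full (N + L) M (msv r1a ++ msv r2') Phi V ->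
  model_extension J xi N (max M (N + L)) (msv r1 ++ msv r2)
    (Phi ++ notin_cs is r1a ++ notin_cs is r2) (V ++ msv r1a ++ msv r2).
Proof.
  intros HN Hdef Hfull Hr1a Hr2' Hr2 HV Hcap [xi' [I [E [D [Mo K]]]]].
  assert (Exi : forall a, In a (msv r1 ++ msv r2) -> xi' a = xi a).
  { intros a Ha. rewrite <- Hfull by auto. apply E.
    apply in_app_or in Ha as [Ha|Ha]; apply in_or_app; [left; apply Hr1a | right]; auto. }
  exists xi'. split; [|split; [|split; [|split]]]; auto.
  - intros a. rewrite !in_app_iff. split; [intros Hn; left; apply D; auto|].
    intros [Ha|[Ha|Ha]]; apply D; [auto | apply HV; left | apply HV; right; apply Hr2];
      auto.
  - intros c Hc. rewrite !in_app_iff in Hc. destruct Hc as [Hc|Hc]; [apply Mo; auto|].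
    assert (Hc' : exists i a, c = CNotIn i a /\ In i is /\ In a (msv r1 ++ msv r2)).
    { destruct Hc as [Hc|Hc]; apply In_notin_cs in Hc; destruct Hc as [i [a [-> [Hi Ha]]]];
        exists i, a; repeat split; auto; apply in_or_app; [left; apply Hr1a | right]; auto. }
    destruct Hc' as [i [a [-> [Hi Ha]]]]. simpl. rewrite Exi by auto.
    specialize (Hcap i a Hi Ha). unfold xis in Hcap.
    destruct (xi a) as [t|] eqn:Et; [eauto | exfalso; eapply Hdef; eauto].
  - intros a Ha. rewrite !in_app_iff, Hr1a in Ha. rewrite in_app_iff.
    destruct Ha as [Ha|[Ha|Ha]]; auto.
    destruct (K a Ha) as [Hb|Hb]; [|right; lia].
    apply in_app_or in Hb as [Hb|Hb]; [left; left; apply Hr1a; auto|].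
    destruct (Hr2' a Hb); [auto | right; lia].
Qed.

Definition complete_mono (n : nat) : Prop :=
  forall J xi r1 r2 r1' r2' N, msize r1 + msize r2 <= n -> wfm r1 -> wfm r2 ->
  (forall a, In a (msv r1 ++ msv r2) -> a < N) ->
  msubst IVar (xis xi) r1 r1' -> msubst IVar (xis xi) r2 r2' -> subm J r1' r2' ->
  exists Phi V M, inferm Phi r1 r2 V /\ model_extension J xi N M (msv r1 ++ msv r2) Phi V.

Definition complete_ty (n : nat) : Prop :=
  forall J xi s1 s2 s1' s2' N, tsize s1 + tsize s2 <= n -> wft s1 -> wft s2 ->
  (forall a, In a (tsv s1 ++ tsv s2) -> a < N) ->
  tsubst IVar (xis xi) s1 s1' -> tsubst IVar (xis xi) s2 s2' -> subt J s1' s2' ->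
  exists Phi V M, infert Phi s1 s2 V /\ model_extension J xi N M (tsv s1 ++ tsv s2) Phi V.

Lemma infert_all_renamed Phi is is' r1 r1a js r2 alphas r2' V :
  length is' = length is -> NoDup is' ->
  (forall k x, In k is' -> In x (tfv (TAll is r1)) -> k <> x) ->
  msubst (upd IVar is (map IVar is')) SVar r1 r1a ->
  wft (TAll js r2) -> length alphas = length js -> NoDup alphas ->
  (forall a, In a alphas -> ~ In a (msv r1a) /\ ~ In a (msv r2)) ->
  msubst (upd IVar js (map SVar alphas)) SVar r2 r2' ->
  inferm Phi r1a r2' V ->
  (forall i, In i is' -> ~ In i (tfv (TAll js r2))) ->
  infert (Phi ++ notin_cs is' r1a ++ notin_cs is' r2) (TAll is r1) (TAll js r2)
    (V ++ msv r1a ++ msv r2).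
Proof.
  intros Lk NDk Hcap Hr1a W2 Hlen NDa Hfresh Hr2' D Hside.
  apply inf_alpha with (s1' := TAll is' r1a) (s2' := TAll js r2).
  - apply ts_all; auto.
    intros k x Hk Hx [E|[]]. exact (Hcap k x Hk Hx (eq_sym E)).
  - apply aeq_refl; auto.
  - eapply inf_all; eauto.
Qed.

Lemma complete_all n J xi N is r1 is' r1x js r2 ks rt as_ R :
  complete_mono n -> msize r1 + msize r2 <= n ->
  wft (TAll is r1) -> wft (TAll js r2) -> (forall a, In a (msv r1 ++ msv r2) -> a < N) ->
  (forall a, In a (msv r1 ++ msv r2) -> xi a <> None) ->
  tsubst IVar (xis xi) (TAll is r1) (TAll is' r1x) ->
  tsubst IVar (xis xi) (TAll js r2) (TAll ks rt) ->
  length as_ = length ks -> msubst (upd IVar ks as_) SVar rt R -> subm J r1x R ->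
  (forall i, In i is' -> ~ In i (tfv (TAll ks rt))) ->
  exists Phi V M, infert Phi (TAll is r1) (TAll js r2) V /\
    model_extension J xi N M (msv r1 ++ msv r2) Phi V.
Proof.
  intros IHM Hsz W1 W2 HN Hdef S1 S2 Las HR Hsm Hfr.
  inversion S1 as [? ? ? ? Lk NDk Hf1 Hf2 Hr1x]; subst.
  inversion S2 as [? ? ? ? Lk2 _ _ _ _]; subst.
  set (L := length js). set (alphas := seq N L). set (xi_full := svar_extend xi N as_).
  assert (Hfull : forall a, a < N -> xi_full a = xi a) by (intros; apply svar_extend_lt; auto).
  assert (Halphas : map (xis xi_full) alphas = as_).
  { unfold alphas, L. rewrite <- Lk2, <- Las. apply map_xis_svar_extend. }
  destruct (msubst_exists (upd IVar is (map IVar is')) SVar r1) as [r1a Hr1a].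
  destruct (msubst_exists (upd IVar js (map SVar alphas)) SVar r2) as [r2' Hr2'].
  assert (Hlen : length alphas = length js) by apply length_seq.
  assert (Hr1a_sv : forall a, In a (msv r1a) <-> In a (msv r1))
    by (intros; apply (msubst_rename_sv _ _ _ _ (upd_IVar_map_IVar is is') Hr1a)).
  assert (Hr2'_sv : forall a, In a (msv r2') -> In a (msv r2) \/ (N <= a /\ a < N + L)).
  { intros a [Ha|Ha]%(msubst_svars_sv _ _ _ _ _ Hlen Hr2'); auto.
    apply in_seq in Ha. right; lia. }
  destruct (IHM J xi_full r1a r2' r1x R (N + L)) as [Phi [V [M [D ME]]]].
  - rewrite (msubst_size _ _ _ _ Hr1a), (msubst_size _ _ _ _ Hr2'). auto.
  - eapply msubst_wf; [eauto | apply W1].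
  - eapply msubst_wf; [eauto | apply W2].
  - intros a [Ha|Ha]%in_app_or.
    + assert (a < N) by (apply HN, in_or_app; left; apply Hr1a_sv; auto). lia.
    + destruct (Hr2'_sv a Ha); [assert (a < N) by (apply HN, in_or_app; auto) | ]; lia.
  - eapply msubst_factor; [exact Hr1a | exact Hr1x | |].
    + intros x _. destruct (upd_IVar_map_IVar is is' x) as [k ->]. reflexivity.
    + intros a Ha. simpl. unfold xis. rewrite Hfull; auto. apply HN, in_or_app; auto.
  - eapply msubst_inst_svars; [exact S2 | exact Hr2' | rewrite Halphas; exact HR | auto |].
    intros a Ha. unfold xis. rewrite Hfull; auto. apply HN, in_or_app; auto.
  - exact Hsm.
  - exists (Phi ++ notin_cs is' r1a ++ notin_cs is' r2), (V ++ msv r1a ++ msv r2), (max M (N + L)).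
    destruct (proj1 infer_svars _ _ _ _ D) as [VV _]. split.
    + eapply infert_all_renamed; eauto using seq_NoDup.
      * intros k x Hk Hx ->. apply (Hf1 x x Hk Hx). left; auto.
      * intros a Ha. apply in_seq in Ha. rewrite Hr1a_sv.
        split; intros Hb; assert (a < N) by (apply HN, in_or_app; auto); lia.
      * intros i Hi Hfv. apply (Hfr i Hi), (tsubst_fv _ _ _ _ _ S2). left. exists i. simpl; auto.
    + eapply model_extension_all; eauto.
      * intros b Hb. apply (msubst_SVar_sv _ _ _ _ Hr2' Hb).
      * intros i a Hi [Ha|Ha]%in_app_or; [eapply Hf2; eauto|].
        intros Hia. apply (Hfr i Hi), (tsubst_fv _ _ _ _ _ S2). right. eauto.
Qed.

Lemma complete_base J xi N a b :
  leJ J (isub IVar (xis xi) a) (isub IVar (xis xi) b) ->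
  model_extension J xi N N (isv a ++ isv b) [CLe a b] (isv a ++ isv b).
Proof.
  intros Hle. set (V := isv a ++ isv b).
  assert (Ground : forall c, In c V -> exists t, xi c = Some t /\ isv t = []).
  { destruct Hle as [Ga [Gb _]]. unfold V.
    intros c [Hc|Hc]%in_app_or; [apply (isub_ground_value xi a) | apply (isub_ground_value xi b)];
      auto. }
  assert (xis_V : forall c, In c V -> xis (restr xi V) c = xis xi c).
  { intros c Hc. unfold xis, restr. destruct (in_dec Nat.eq_dec c V); tauto. }
  exists (restr xi V). split; [|split; [|split; [|split]]].
  - intros c t. unfold restr. destruct (in_dec Nat.eq_dec c V) as [Hc|]; [|discriminate].
    destruct (Ground c Hc) as [u [-> Gu]]. congruence.
  - intros c Hc. unfold restr. destruct (in_dec Nat.eq_dec c V); tauto.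
  - intros c. unfold restr. destruct (in_dec Nat.eq_dec c V) as [Hc|]; [|tauto].
    destruct (Ground c Hc) as [u [-> _]]. split; [auto | discriminate].
  - intros c [<-|[]]. simpl.
    rewrite (isub_ext IVar (xis (restr xi V)) IVar (xis xi) a),
            (isub_ext IVar (xis (restr xi V)) IVar (xis xi) b);
      auto; intros; apply xis_V, in_or_app; auto.
  - intros; left; auto.
Qed.

Lemma complete_mono_step n : complete_mono n -> complete_ty n -> complete_mono (S n).
Proof.
  intros IHM IHT J xi r1 r2 r1' r2' N Hsz W1 W2 HN S1 S2 Hsub.
  destruct r1 as [B a|a1 a2|s1 q1]; destruct r2 as [B' b|b1 b2|s2 q2];
    inversion S1 as [|? ? x1 x2 Sx1 Sx2|? ? x1 x2 Sx1 Sx2]; subst;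
    inversion S2 as [|? ? y1 y2 Sy1 Sy2|? ? y1 y2 Sy1 Sy2]; subst;
    inversion Hsub as [? ? ? Hle|? ? ? ? Sub1 Sub2|? ? ? ? Sub1 Sub2]; subst; simpl in *.
  - exists [CLe a b], (isv a ++ isv b), N. split; [constructor | apply complete_base; auto].
  - destruct W1 as [Wa1 Wa2], W2 as [Wb1 Wb2].
    destruct (IHM J xi a1 b1 x1 y1 N) as [Phi1 [V1 [M1 [D1 ME1]]]];
      [lia | auto.. |].
    { intros; apply HN; rewrite !in_app_iff in *; tauto. }
    destruct (IHM J xi a2 b2 x2 y2 (max N M1)) as [Phi2 [V2 [M2 [D2 ME2]]]];
      [lia | auto.. |].
    { intros. enough (a < N) by lia. apply HN; rewrite !in_app_iff in *; tauto. }
    assert (HS : forall a, In a ((msv a1 ++ msv a2) ++ msv b1 ++ msv b2) <->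
                         In a (msv a1 ++ msv b1) \/ In a (msv a2 ++ msv b2))
      by (intros; rewrite !in_app_iff; tauto).
    exists (Phi1 ++ Phi2), (V1 ++ V2), (max M1 M2). split.
    + constructor; auto. rewrite <- app_assoc in HS. eapply model_extension_shared; eauto.
    + eapply model_extension_app; eauto;
        [apply (proj1 infer_svars _ _ _ _ D1) | apply (proj1 infer_svars _ _ _ _ D2)].
  - destruct W1 as [Wa1 Wa2], W2 as [Wb1 Wb2].
    destruct (IHT J xi s2 s1 y1 x1 N) as [Phi1 [V1 [M1 [D1 ME1]]]];
      [lia | auto.. |].
    { intros; apply HN; rewrite !in_app_iff in *; tauto. }
    destruct (IHM J xi q1 q2 x2 y2 (max N M1)) as [Phi2 [V2 [M2 [D2 ME2]]]];
      [lia | auto.. |].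
    { intros. enough (a < N) by lia. apply HN; rewrite !in_app_iff in *; tauto. }
    assert (HS : forall a, In a ((tsv s1 ++ msv q1) ++ tsv s2 ++ msv q2) <->
                         In a (tsv s2 ++ tsv s1) \/ In a (msv q1 ++ msv q2))
      by (intros; rewrite !in_app_iff; tauto).
    exists (Phi1 ++ Phi2), (V1 ++ V2), (max M1 M2). split.
    + constructor; auto. rewrite <- app_assoc in HS. eapply model_extension_shared; eauto.
    + eapply model_extension_app; eauto;
        [apply (proj2 infer_svars _ _ _ _ D1) | apply (proj1 infer_svars _ _ _ _ D2)].
Qed.

Lemma complete_ty_step n : complete_mono n -> complete_ty (S n).
Proof.
  intros IHM J xi [is r1] [js r2] rho' tau' N Hsz W1 W2 HN S1 S2 Hsub.
  destruct (proj2 (sub_ground J) _ _ Hsub) as [G1 G2].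
  assert (Hdef : forall a, In a (msv r1 ++ msv r2) -> xi a <> None)
    by (intros a [Ha|Ha]%in_app_or;
        [exact (tsubst_ground_defined _ _ _ _ a S1 G1 Ha)
        |exact (tsubst_ground_defined _ _ _ _ a S2 G2 Ha)]).
  destruct (subt_inv J _ _ Hsub (tsubst_wf _ _ _ _ S1 W1) (tsubst_wf _ _ _ _ S2 W2))
    as [is' [r1x [[ks rt] [R [A1 [A2 [[as_ [Las HR]] [Hsm Hfr]]]]]]]].
  eapply complete_all; eauto using tsubst_aeq.
  simpl in Hsz. lia.
Qed.

Lemma completeness n : complete_mono n /\ complete_ty n.
Proof.
  induction n as [|n [IHM IHT]].
  - split; [intros J xi [] [] | intros J xi [] []]; simpl; intros; lia.
  - split; [apply complete_mono_step | apply complete_ty_step]; auto.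
Qed.
Theorem mainTheorem12 :
  (forall (Phi : socp) (rho tau : ty) (V : list nat),
     wft rho -> wft tau ->
     infert Phi rho tau V ->
     forall (J : interp) (xi : sosubst),
       is_sosubst xi -> model J xi Phi ->
       forall rho' tau',
         tsubst IVar (xis xi) rho rho' ->
         tsubst IVar (xis xi) tau tau' ->
         subt J rho' tau')
  /\
  (forall (J : interp) (xi : sosubst) (rho tau rho' tau' : ty),
     wft rho -> wft tau ->
     is_sosubst xi ->
     (forall a, xi a <> None -> In a (tsv rho ++ tsv tau)) ->
     tsubst IVar (xis xi) rho rho' ->
     tsubst IVar (xis xi) tau tau' ->
     subt J rho' tau' ->
     exists (Phi : socp) (V : list nat),
       infert Phi rho tau V /\
       exists xi' : sosubst,
         is_sosubst xi' /\
         (forall a t, xi a = Some t -> xi' a = Some t) /\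
         (forall a, xi' a <> None <-> In a V) /\
         model J xi' Phi).
Proof.
  split.
  - intros Phi rho tau V W1 W2 D J xi _ Hm rho' tau' S1 S2.
    exact (proj2 soundness _ _ _ _ D W1 W2 J xi Hm _ _ S1 S2).
  - intros J xi rho tau rho' tau' W1 W2 _ Hdom S1 S2 Hsub.
    set (W := tsv rho ++ tsv tau).
    assert (HN : forall a, In a W -> a < S (list_max W)).
    { intros a Ha. pose proof (proj1 (list_max_le W _) (le_n _)) as HM.
      rewrite Forall_forall in HM. specialize (HM a Ha). lia. }
    destruct (proj2 (completeness (tsize rho + tsize tau)) J xi rho tau rho' tau' _
      (le_n _) W1 W2 HN S1 S2 Hsub) as [Phi [V [M [D [xi' [I [E [Dom [Mo _]]]]]]]]].
    exists Phi, V. split; auto. exists xi'. split; [|split]; auto.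
    intros a t Ht. rewrite E; auto. apply Hdom. congruence.
Qed.
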